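(* Let $X=\{1,\dots,n\}$ with $n\ge2$, $Y$ a finite set, and $Q=(q(y,y'))$ a symmetric irreducible stochastic matrix on $Y$ with distinct eigenvalues $\lambda_0=1,\lambda_1,\dots,\lambda_m$ and eigenspaces $W_0,\dots,W_m$ (notation in context). Let $1\le h\le n-1$, $0<p_0<1$, and let $P=p_0M+(1-p_0)\frac{\Delta_h}{h(n-h)|Y|}$ be the second crested product on $L(\Theta_h)$. Let $\underline a=(a_0,\dots,a_m)$ be a type with $a_0+\cdots+a_m=h$ and let $k$ be an integer with $\ell(\underline a)\le k\le h$. Then every $F\in P_{h,\underline a,k}$ satisfies $PF=\mu F$ with $$\mu=p_0\cdot\frac1h\sum_{j=0}^ma_j\lambda_j+(1-p_0)\frac{(n+\ell(\underline a)-k-h)(h-k+1)-(n-h)}{h(n-h)}.$$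
   Context: $Q$ acts on $L(Y)$ by $(Qf)(y)=\sum_{y'}q(y,y')f(y')$; $W_0$ is the space of constant functions and $W_j$ the eigenspace of $\lambda_j$. For $0\le k\le n$, $\Theta_k$ is the set of functions $\theta$ with $\mathrm{dom}(\theta)$ a $k$-subset of $X$ and values in $Y$ ($\Theta_0$ = empty function); $\varphi\subseteq\theta$ means $\mathrm{dom}\varphi\subseteq\mathrm{dom}\theta$ and $\theta|_{\mathrm{dom}\varphi}=\varphi$. Operators on $L(\Theta_h)$: $(MF)(\theta)=\frac1h\sum_{j\in\mathrm{dom}\theta}\sum_{y\in Y}q(\theta(j),y)F(\theta_{j\to y})$, where $\theta_{j\to y}$ equals $\theta$ except that its value at $j$ is $y$; $(\Delta_hF)(\theta)=\sum F(\varphi)$ over all $\varphi\in\Theta_h$ with $|\mathrm{dom}\varphi\cap\mathrm{dom}\theta|=h-1$ and $\varphi=\theta$ on $\mathrm{dom}\varphi\cap\mathrm{dom}\theta$ (each row of $\Delta_h$ has $h(n-h)|Y|$ nonzero entries). For $1\le k\le n$: $D_k:L(\Theta_k)\to L(\Theta_{k-1})$, $(D_kF)(\varphi)=\sum_{\theta\in\Theta_k:\theta\supseteq\varphi}F(\theta)$, and $D_k^*:L(\Theta_{k-1})\to L(\Theta_k)$, $(D_k^*F)(\theta)=\sum_{\varphi\subseteq\theta}F(\varphi)$; $D_0:=0$. Types $\underline c=(c_0,\dots,c_m)$ of nonnegative integers, $|\underline c|=\sum c_i$, $\ell(\underline c)=c_1+\cdots+c_m$, $\underline c'=(c_0-1,c_1,\dots,c_m)$.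 A fundamental function of type $\underline c$ on $A\subseteq X$, $|A|=|\underline c|$, is $F=\bigotimes_{j\in A}F^j$ ($F(\theta)=\prod_{j\in A}F^j(\theta(j))$ if $\mathrm{dom}\theta=A$, $0$ otherwise) with each $F^j$ in some $W_{i_j}$ and exactly $c_i$ indices with $i_j=i$; $P_{k,\underline c,A}$ is their span, $P_{k,\underline c}=\bigoplus_{|A|=k}P_{k,\underline c,A}$ ($\{0\}$ if an entry is negative). $D_{k,\underline c}=D_k|_{P_{k,\underline c}}$, $D^*_{k,\underline c}=D^*_k|_{P_{k-1,\underline c'}}$. For $|\underline c|=k$: $P_{k,\underline c,k}=\ker D_{k,\underline c}$; for $k<h\le n$, $|\underline c|=h$, $\ell(\underline c)\le k$: $P_{h,\underline c,k}=D^*_{h,\underline c}(P_{h-1,\underline c',k})$. *)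

From HB Require Import structures.
From mathcomp Require Import all_boot all_order all_algebra.
From mathcomp Require Import reals.
Set Implicit Arguments. Unset Strict Implicit. Unset Printing Implicit Defensive.
Import Order.TTheory GRing.Theory Num.Theory.
Local Open Scope ring_scope.

Section Crested.
Variables (R : realType) (n : nat) (Y : finType) (q : Y -> Y -> R).

Definition symmetric_kernel := forall y y', q y y' = q y' y.
Definition stochastic_kernel :=
  (forall y y', 0 <= q y y') /\ (forall y, \sum_(y' : Y) q y y' = 1).
Fixpoint qpow (t : nat) (y y' : Y) : R :=
  match t with
  | O => (y == y')%:R
  | S t' => \sum_(z : Y) q y z * qpow t' z y'
  end.
Definition irreducible_kernel := forall y y', exists t, 0 < qpow t y y'.

Definition Qop (f : Y -> R) : Y -> R := fun y => \sum_(y' : Y) q y y' * f y'.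
Definition is_eigenvalue (l : R) := exists f : Y -> R,
  (exists y, f y != 0) /\ forall y, Qop f y = l * f y.

(* Partial functions X -> Y, X = 'I_n; Theta_k = those with k-element domain *)
Definition pfun := {ffun 'I_n -> option Y}.
Definition dom (t : pfun) : {set 'I_n} := [set j | t j != None].
Definition psub (phi t : pfun) : bool :=
  (dom phi \subset dom t) && [forall j in dom phi, phi j == t j].
Definition pupd (t : pfun) (j : 'I_n) (y : Y) : pfun :=
  [ffun i => if i == j then Some y else t i].

(* operators on L(Theta_h) (functions are taken as pfun -> R, vanishing
   outside the relevant Theta_k) *)
Definition Mop (h : nat) (F : pfun -> R) : pfun -> R := fun t =>
  if #|dom t| == h then
    h%:R^-1 * \sum_(j in dom t) \sum_(y : Y) oapp (fun y0 => q y0 y) 0 (t j) * F (pupd t j y)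
  else 0.
Definition Deltaop (h : nat) (F : pfun -> R) : pfun -> R := fun t =>
  if #|dom t| == h then
    \sum_(phi : pfun | [&& #|dom phi| == h, #|dom phi :&: dom t| == h.-1 &
                          [forall j in dom phi :&: dom t, phi j == t j]]) F phi
  else 0.
Definition Dop (k : nat) (F : pfun -> R) : pfun -> R := fun phi =>
  if k == 0%N then 0 else
  if #|dom phi| == k.-1 then
    \sum_(t : pfun | (#|dom t| == k) && psub phi t) F t
  else 0.
Definition Dstar (k : nat) (F : pfun -> R) : pfun -> R := fun t =>
  if #|dom t| == k then
    \sum_(phi : pfun | (#|dom phi| == k.-1) && psub phi t) F phi
  else 0.
Definition crestedP (h : nat) (p0 : R) (F : pfun -> R) : pfun -> R := fun t =>
  p0 * Mop h F t
  + (1 - p0) * ((h * (n - h) * #|Y|)%:R)^-1 * Deltaop h F t.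

Variables (m : nat) (lam : 'I_m.+1 -> R).
Definition W (i : 'I_m.+1) (f : Y -> R) := forall y, Qop f y = lam i * f y.

Definition ell (c : 'I_m.+1 -> nat) : nat := (\sum_(i < m.+1 | i != ord0) c i)%N.
Definition type_size (c : 'I_m.+1 -> nat) : nat := (\sum_(i < m.+1) c i)%N.
Definition tdecr (c : 'I_m.+1 -> nat) : 'I_m.+1 -> nat :=
  fun i => if i == ord0 then (c i).-1 else c i.

Definition fundamental (c : 'I_m.+1 -> nat) (A : {set 'I_n}) (F : pfun -> R) :=
  exists (iota : 'I_n -> 'I_m.+1) (Fj : 'I_n -> Y -> R),
    (forall j, j \in A -> W (iota j) (Fj j)) /\
    (forall i, #|[set j in A | iota j == i]| = c i) /\
    (forall t, F t = if dom t == A then \prod_(j in A) oapp (Fj j) 0 (t j) else 0).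

Definition span (S : (pfun -> R) -> Prop) (F : pfun -> R) :=
  exists (N : nat) (coef : 'I_N -> R) (G : 'I_N -> pfun -> R),
    (forall i, S (G i)) /\ forall t, F t = \sum_(i < N) coef i * G i t.

Definition Ptype (k : nat) (c : 'I_m.+1 -> nat) : (pfun -> R) -> Prop :=
  span (fun F => exists A : {set 'I_n}, #|A| = k /\ fundamental c A F).

(* Pdef k d c = P_{k+d, c, k} (for |c| = k+d, ell c <= k) *)
Fixpoint Pdef (k d : nat) (c : 'I_m.+1 -> nat) (F : pfun -> R) : Prop :=
  match d with
  | O => Ptype k c F /\ forall phi, Dop k F phi = 0
  | S d' =>
      if c ord0 == 0%N then forall t, F t = 0   (* P_{h-1,c'} = {0} *)
      else exists G, Pdef k d' (tdecr c) G /\ forall t, F t = Dstar (k + d) G t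
  end.
Definition Phck (h : nat) (c : 'I_m.+1 -> nat) (k : nat) := Pdef k (h - k) c.

End Crested.

(* Write J_w (jump w) for the operator resampling one coordinate of t through the
   kernel w, J_w F(t) = sum_(j in dom t) sum_y w(t j, y) F(t_{j->y}), and E (exch)
   for the operator moving one coordinate of t to a free position with an arbitrary
   value, so that M = J_q / h and Delta_h = E.  On Theta_j
     D^* D = J_1 + E,   D D^* = (n - j)|Y| + E,   J_w D^* = rho D^* + D^* J_w
   when w has constant row sums rho.  On fundamental functions of type c, J_w acts
   by sum_i c_i ev_i when w acts on W_i by ev_i: by sum_i c_i lam_i for w = q, and
   by c_0 |Y| for w = 1, since W_0 consists of the constants (Q is irreducible) and
   the other W_i have mean zero (Q is symmetric).  Propagating these scalars along
   P_{h,a,k} = D^*(P_{h-1,a',k}) shows that D^* D acts on P_{h,a,k} by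
   |Y| (h - k) (n - k - a_0 + 1), hence Delta_h = D^* D - J_1 acts by a scalar too. *)
From HB Require Import structures.
From mathcomp Require Import all_boot all_order all_algebra.
From mathcomp Require Import reals boolp ring zify.
Set Implicit Arguments. Unset Strict Implicit. Unset Printing Implicit Defensive.
Import Order.TTheory GRing.Theory Num.Theory.
Local Open Scope ring_scope.

Lemma big_inj_onto (R : Type) (idx : R) (op : Monoid.com_law idx)
    (I J : finType) (P : pred I) (Q : pred J) (f : J -> I) (F : I -> R) :
  {in Q &, injective f} -> (forall j, Q j -> P (f j)) ->
  (forall i, P i -> exists2 j, Q j & i = f j) ->
  \big[op/idx]_(i | P i) F i = \big[op/idx]_(j | Q j) F (f j).
Proof.
move=> injf fP Pf.
transitivity (\big[op/idx]_(i in f @: [set j | Q j]) F i).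
  apply: eq_bigl => i; apply/idP/imsetP => [/Pf [j Qj ->]|[j]].
    by exists j; rewrite ?inE.
  by rewrite inE => Qj ->; apply: fP.
rewrite big_imset; last by move=> x y; rewrite !inE; apply: injf.
by apply: eq_bigl => j; rewrite inE.
Qed.

Lemma setD_single (T : finType) (A B : {set T}) j :
  B \subset A -> #|A| = j.+1 -> #|B| = j -> exists i, A :\: B = [set i].
Proof.
move=> BA cA cB; apply/cards1P.
by rewrite cardsD (setIidPr BA) cA cB subSnn.
Qed.

Section PartialFunctions.
Variables (n : nat) (Y : finType).
Local Notation pf := (pfun n Y).

Definition pdel (t : pf) (i : 'I_n) : pf :=
  [ffun x => if x == i then None else t x].

Lemma mem_dom (t : pf) x : (x \in dom t) = (t x != None).
Proof. by rewrite inE. Qed.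

Lemma notin_dom (t : pf) x : x \notin dom t -> t x = None.
Proof. by rewrite mem_dom negbK => /eqP. Qed.

Lemma in_dom (t : pf) x : x \in dom t -> exists y, t x = Some y.
Proof. by rewrite mem_dom; case: (t x) => // y _; exists y. Qed.

Lemma dom_pdel (t : pf) i : dom (pdel t i) = dom t :\ i.
Proof. by apply/setP => x; rewrite !inE ffunE; case: (eqVneq x i). Qed.

Lemma dom_pupd (t : pf) j y : dom (pupd t j y) = j |: dom t.
Proof. by apply/setP => x; rewrite !inE ffunE; case: (eqVneq x j). Qed.

Lemma dom_pupd_in (t : pf) j y : j \in dom t -> dom (pupd t j y) = dom t.
Proof. by move=> jt; rewrite dom_pupd; apply/setUidPr; rewrite sub1set. Qed.

Lemma pdel_pupd (t : pf) j y : pdel (pupd t j y) j = pdel t j.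
Proof. by apply/ffunP => x; rewrite !ffunE; case: (x == j). Qed.

Lemma pupd_pdel (t : pf) i y : pupd (pdel t i) i y = pupd t i y.
Proof. by apply/ffunP => x; rewrite !ffunE; case: (x == i). Qed.

Lemma pdel_pupdC (t : pf) i j y :
  i != j -> pdel (pupd t j y) i = pupd (pdel t i) j y.
Proof.
move=> ij; apply/ffunP => x; rewrite !ffunE.
by case: (eqVneq x i) => [->|//]; rewrite (negbTE ij).
Qed.

Lemma pdel_notin (t : pf) i : i \notin dom t -> pdel t i = t.
Proof.
move=> /notin_dom ti; apply/ffunP => x; rewrite ffunE.
by case: (eqVneq x i) => [->|].
Qed.

Lemma card_pdel (t : pf) j i :
  #|dom t| = j.+1 -> i \in dom t -> #|dom (pdel t i)| = j.
Proof. by move=> ct it; move: ct; rewrite dom_pdel (cardsD1 i) it add1n => -[]. Qed.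

Lemma card_pupd (t : pf) j x y :
  #|dom t| = j -> x \notin dom t -> #|dom (pupd t x y)| = j.+1.
Proof. by move=> ct xt; rewrite dom_pupd cardsU1 xt ct. Qed.

Lemma card_dom_le (t : pf) : (#|dom t| <= n)%N.
Proof. by rewrite -[X in (_ <= X)%N]card_ord max_card. Qed.

Lemma card_notin_dom (t : pf) : #|[pred x | x \notin dom t]| = (n - #|dom t|)%N.
Proof.
transitivity (#|'I_n| - #|dom t|)%N; last by rewrite card_ord.
rewrite -(cardsC (dom t)) addKn.
by apply: eq_card => x; rewrite !inE.
Qed.

Lemma psub_pdel (phi t : pf) i :
  psub phi t -> dom t :\: dom phi = [set i] -> phi = pdel t i.
Proof.
move=> /andP [_ /forallP agree] D; apply/ffunP => x; rewrite ffunE.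
have xD : (x \in dom t :\: dom phi) = (x == i) by rewrite D in_set1.
rewrite in_setD in xD.
case: (boolP (x \in dom phi)) => xphi.
  by rewrite -xD xphi; apply/eqP; exact: (implyP (agree x) xphi).
rewrite xphi /= in xD; rewrite (notin_dom xphi).
by case: (eqVneq x i) xD => // _ xD; rewrite notin_dom ?xD.
Qed.

Lemma psub_pupd (t psi : pf) x y :
  psub t psi -> dom psi :\: dom t = [set x] -> psi x = Some y -> psi = pupd t x y.
Proof.
move=> /andP [_ /forallP agree] D psix; apply/ffunP => z; rewrite ffunE.
case: (eqVneq z x) => [-> //|zx].
have zD : (z \in dom psi :\: dom t) = false by rewrite D in_set1 (negbTE zx).
rewrite in_setD in zD.
case: (boolP (z \in dom t)) => zt; first by apply/esym/eqP; exact: (implyP (agree z) zt).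
by rewrite zt /= in zD; rewrite !notin_dom ?zD.
Qed.

Lemma adjacent_pupd_pdel (phi t : pf) j :
  #|dom t| = j.+1 -> #|dom phi| = j.+1 -> #|dom phi :&: dom t| = j ->
  [forall x in dom phi :&: dom t, phi x == t x] ->
  exists i x y, [/\ i \in dom t, x \notin dom t & phi = pupd (pdel t i) x y].
Proof.
move=> ct cphi ccap /forallP agree.
have [i Di] := setD_single (subsetIr (dom phi) (dom t)) ct ccap.
have [x Dx] := setD_single (subsetIl (dom phi) (dom t)) cphi ccap.
have memDi z : (z \in dom t) && ~~ (z \in dom phi) = (z == i).
  by rewrite -in_set1 -Di in_setD in_setI; case: (z \in dom t); case: (_ \in _).
have memDx z : (z \in dom phi) && ~~ (z \in dom t) = (z == x).
  by rewrite -in_set1 -Dx in_setD in_setI; case: (z \in dom t); case: (_ \in _).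
have /andP [it iphi] : (i \in dom t) && ~~ (i \in dom phi) by rewrite memDi.
have /andP [/in_dom [y phix] xt] : (x \in dom phi) && ~~ (x \in dom t) by rewrite memDx.
exists i, x, y; split => //; apply/ffunP => z; rewrite !ffunE.
case: (eqVneq z x) => [-> //|zx]; case: (eqVneq z i) => [->|zi].
  exact: notin_dom.
case: (boolP (z \in dom phi)) => zphi.
  have zt : z \in dom t by apply: contraTT zx; rewrite -memDx zphi => ->.
  by apply/eqP; apply: (implyP (agree z)); rewrite inE zphi zt.
rewrite !notin_dom //; apply: contraTN zi; rewrite -memDi => ->.
by rewrite zphi.
Qed.

End PartialFunctions.

Section Reindexing.
Variables (V : nmodType) (n : nat) (Y : finType).
Local Notation pf := (pfun n Y).

Lemma big_psub_pdel (X : pf -> V) (t : pf) j : #|dom t| = j.+1 ->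
  \sum_(phi : pf | (#|dom phi| == j) && psub phi t) X phi =
  \sum_(i in dom t) X (pdel t i).
Proof.
move=> ct; apply: big_inj_onto.
- move=> i1 i2 i1t _ /ffunP /(_ i1); rewrite !ffunE eqxx.
  case: (eqVneq i1 i2) => // _ /esym ti1.
  by move: i1t; rewrite mem_dom ti1.
- move=> i it; rewrite (card_pdel ct it) eqxx /psub dom_pdel subD1set /=.
  apply/forallP => x; apply/implyP; rewrite in_setD1 => /andP [xi _].
  by rewrite ffunE (negbTE xi).
- move=> phi /andP [/eqP cphi sub_phi]; have /andP [dsub _] := sub_phi.
  have [i D] := setD_single dsub ct cphi.
  have : i \in dom t :\: dom phi by rewrite D set11.
  by rewrite in_setD => /andP [_ it]; exists i => //; apply: psub_pdel.
Qed.

Lemma big_psup_pupd (X : pf -> V) (t : pf) j : #|dom t| = j ->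
  \sum_(psi : pf | (#|dom psi| == j.+1) && psub t psi) X psi =
  \sum_(x | x \notin dom t) \sum_(y : Y) X (pupd t x y).
Proof.
move=> ct; rewrite pair_big_dep.
rewrite (eq_bigl (fun p : 'I_n * Y => p.1 \notin dom t)); last by move=> p; rewrite andbT.
apply: big_inj_onto.
- move=> [x1 y1] [x2 y2] /= x1t _ /ffunP /(_ x1); rewrite !ffunE eqxx.
  by case: (eqVneq x1 x2) => [-> [->] //|_]; rewrite notin_dom.
- move=> [x y] /= xt; rewrite (card_pupd y ct xt) eqxx /psub dom_pupd subsetUr /=.
  apply/forallP => z; apply/implyP => zt; rewrite ffunE.
  by case: (eqVneq z x) => // zx; move: xt; rewrite -zx zt.
- move=> psi /andP [/eqP cpsi sub_psi]; have /andP [dsub _] := sub_psi.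
  have [x D] := setD_single dsub cpsi ct.
  have : x \in dom psi :\: dom t by rewrite D set11.
  rewrite in_setD => /andP [xt /in_dom [y psix]].
  by exists (x, y) => //; apply: psub_pupd.
Qed.

Definition exch (X : pf -> V) (t : pf) : V :=
  \sum_(i in dom t) \sum_(x | x \notin dom t) \sum_(y : Y) X (pupd (pdel t i) x y).

Lemma big_adjacent_exch (X : pf -> V) (t : pf) j : #|dom t| = j.+1 ->
  \sum_(phi : pf | [&& #|dom phi| == j.+1, #|dom phi :&: dom t| == j &
                     [forall x in dom phi :&: dom t, phi x == t x]]) X phi = exch X t.
Proof.
move=> ct; rewrite /exch.
under [in RHS]eq_bigr do rewrite pair_big_dep.
rewrite [in RHS]pair_big_dep; apply: big_inj_onto.
- move=> [i1 [x1 y1]] [i2 [x2 y2]] /andP [/= i1t /andP [x1t _]] _ E.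
  have := congr1 (fun f : pf => f x1) E; rewrite /= !ffunE eqxx.
  case: (eqVneq x1 x2) => [ex|_]; last by rewrite notin_dom //; case: ifP.
  subst x2 => -[ey]; subst y2.
  have := congr1 (fun f : pf => f i1) E; rewrite /= !ffunE eqxx.
  have -> : (i1 == x1) = false by apply: contraNF x1t => /eqP <-.
  case: (eqVneq i1 i2) => [-> //|_ /esym ti1].
  by move: i1t; rewrite mem_dom ti1.
- move=> [i [x y]] /andP [/= it /andP [xt _]].
  have cap : (x |: dom t :\ i) :&: dom t = dom t :\ i.
    apply/setP => z; rewrite !inE; case: (eqVneq z x) => [->|_] /=.
      by rewrite (notin_dom xt) andbF.
    by rewrite -andbA andbb.
  have xD : x \notin dom t :\ i by rewrite in_setD1 (negbTE xt) andbF.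
  have cD : #|dom t :\ i| = j by rewrite -dom_pdel (card_pdel ct it).
  rewrite dom_pupd dom_pdel cap cardsU1 xD cD !eqxx /=.
  apply/forallP => z; apply/implyP; rewrite !inE => /andP [zi zt].
  rewrite !ffunE (negbTE zi); case: (eqVneq z x) => // zx.
  by move: xt; rewrite -zx mem_dom zt.
- move=> phi /and3P [/eqP cphi /eqP ccap agree].
  have [i [x [y [it xt ->]]]] := adjacent_pupd_pdel ct cphi ccap agree.
  by exists (i, (x, y)); rewrite /= ?it ?xt.
Qed.

End Reindexing.

Section Operators.
Variables (R : realType) (n : nat) (Y : finType).
Local Notation pf := (pfun n Y).
Local Notation ones := (fun _ _ : Y => 1 : R).

Definition jump (w : Y -> Y -> R) (X : pf -> R) (t : pf) : R :=
  \sum_(j in dom t) \sum_(y : Y) oapp (fun y0 => w y0 y) 0 (t j) * X (pupd t j y).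

Lemma jump_ones (X : pf -> R) (t : pf) :
  jump ones X t = \sum_(j in dom t) \sum_(y : Y) X (pupd t j y).
Proof.
apply: eq_bigr => j /in_dom [y0 ->]; apply: eq_bigr => y _.
by rewrite mul1r.
Qed.

Lemma jump_lincomb w N (coef : 'I_N -> R) (H : 'I_N -> pf -> R) (X : pf -> R) :
  (forall t, X t = \sum_i coef i * H i t) ->
  forall t, jump w X t = \sum_i coef i * jump w (H i) t.
Proof.
move=> hX t; rewrite /jump.
under eq_bigr do under eq_bigr do rewrite hX mulr_sumr.
under eq_bigr do rewrite exchange_big /=.
rewrite exchange_big /=; apply: eq_bigr => i _.
rewrite mulr_sumr; apply: eq_bigr => j _; rewrite mulr_sumr; apply: eq_bigr => y _.
by rewrite mulrCA.
Qed.

Lemma jump_supp w (X : pf -> R) L :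
  (forall t, #|dom t| != L -> X t = 0) ->
  forall t, #|dom t| != L -> jump w X t = 0.
Proof.
move=> hX t ct; apply: big1 => j jt; apply: big1 => y _.
by rewrite hX ?mulr0 // dom_pupd_in.
Qed.

Lemma Dstar_pdel (X : pf -> R) (t : pf) j : #|dom t| = j.+1 ->
  Dstar j.+1 X t = \sum_(i in dom t) X (pdel t i).
Proof. by move=> ct; rewrite /Dstar ct eqxx /= (big_psub_pdel _ ct). Qed.

Lemma Dop_pupd (X : pf -> R) (t : pf) j : #|dom t| = j ->
  Dop j.+1 X t = \sum_(x | x \notin dom t) \sum_(y : Y) X (pupd t x y).
Proof. by move=> ct; rewrite /Dop /= ct eqxx (big_psup_pupd _ ct). Qed.

Lemma Dstar_scale j (X G : pf -> R) c : (forall t, X t = c * G t) ->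
  forall t, Dstar j X t = c * Dstar j G t.
Proof.
move=> hX t; rewrite /Dstar; case: ifP => _; last by rewrite mulr0.
by rewrite mulr_sumr; apply: eq_bigr => phi _.
Qed.

Lemma Dop_Dstar (X : pf -> R) (t : pf) j : #|dom t| = j ->
  Dop j.+1 (Dstar j.+1 X) t = ((n - j) * #|Y|)%:R * X t + exch X t.
Proof.
move=> ct; rewrite (Dop_pupd _ ct).
transitivity (\sum_(x | x \notin dom t) \sum_(y : Y)
   (X t + \sum_(i in dom t) X (pupd (pdel t i) x y))).
  apply: eq_bigr => x xt; apply: eq_bigr => y _.
  rewrite (Dstar_pdel _ (card_pupd y ct xt)) dom_pupd big_setU1 //=.
  rewrite pdel_pupd pdel_notin //; congr (_ + _).
  apply: eq_bigr => i it; rewrite pdel_pupdC //.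
  by apply: contraNneq xt => <-.
rewrite /exch; under eq_bigr do rewrite big_split /=.
rewrite big_split /=; congr (_ + _).
  by rewrite !sumr_const card_notin_dom ct -mulrnA mulr_natl mulnC.
under [LHS]eq_bigr do rewrite exchange_big /=.
by rewrite [LHS]exchange_big.
Qed.

Lemma Dstar_Dop (X : pf -> R) (t : pf) j : #|dom t| = j ->
  Dstar j (Dop j X) t = jump ones X t + exch X t.
Proof.
case: j => [|j] ct.
  rewrite jump_ones /exch (cards0_eq ct) !big_set0 addr0 /Dstar ct eqxx.
  by apply: big1 => phi _; rewrite /Dop eqxx.
rewrite (Dstar_pdel _ ct) jump_ones /exch -big_split /=.
apply: eq_bigr => i it.
rewrite (Dop_pupd _ (card_pdel ct it)) dom_pdel.
have iD : i \notin dom t :\ i by rewrite in_setD1 eqxx.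
rewrite (bigD1 i iD) /=; congr (_ + _).
  by apply: eq_bigr => y _; rewrite pupd_pdel.
apply: eq_bigl => x; rewrite in_setD1 negb_and negbK.
by case: (eqVneq x i) => [->|_] /=; rewrite ?eqxx ?it ?andbT ?andbF.
Qed.

Lemma Deltaop_exch (X : pf -> R) (t : pf) h : #|dom t| = h.+1 ->
  Deltaop h.+1 X t = exch X t.
Proof. by move=> ct; rewrite /Deltaop ct eqxx (big_adjacent_exch _ ct). Qed.

(* Resampling a coordinate i of t commutes with deleting another one; the
   terms where the deleted coordinate is i itself produce rho D^* X. *)
Lemma jump_Dstar w rho (X : pf -> R) (t : pf) j :
  (forall y0, \sum_(y : Y) w y0 y = rho) -> #|dom t| = j.+1 ->
  jump w (Dstar j.+1 X) t = rho * Dstar j.+1 X t + Dstar j.+1 (jump w X) t.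
Proof.
move=> wrho ct; rewrite !(Dstar_pdel _ ct) mulr_sumr.
transitivity (\sum_(i in dom t) (rho * X (pdel t i) + \sum_(l in dom t | l != i)
   \sum_(y : Y) oapp (fun y0 => w y0 y) 0 (t i) * X (pupd (pdel t l) i y))).
  apply: eq_bigr => i it; have [y0 ti] := in_dom it.
  transitivity (\sum_(y : Y) w y0 y * (X (pdel t i) +
       \sum_(l in dom t | l != i) X (pupd (pdel t l) i y))).
    apply: eq_bigr => y _; rewrite ti /=.
    rewrite (Dstar_pdel _ _); last by rewrite dom_pupd_in.
    rewrite dom_pupd_in // (bigD1 i it) /= pdel_pupd; congr (_ * (_ + _)).
    by apply: eq_bigr => l /andP [_ li]; rewrite pdel_pupdC.
  under eq_bigr do rewrite mulrDr.
  rewrite big_split /= -mulr_suml wrho; congr (_ + _).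
  under eq_bigr do rewrite mulr_sumr.
  by rewrite exchange_big /= ti.
rewrite big_split /=; congr (_ + _).
rewrite (exchange_big_dep (fun l => l \in dom t)) /=; last by move=> ? ? _ /andP [].
apply: eq_bigr => l lt; rewrite /jump dom_pdel.
apply: eq_big => [i|i].
  by rewrite in_setD1 lt /= andbC eq_sym.
move=> /and3P [_ _ li]; apply: eq_bigr => y _.
by rewrite ffunE eq_sym (negbTE li).
Qed.

End Operators.

Section Eigenspaces.
Variables (R : realType) (Y : finType) (q : Y -> Y -> R).
Hypothesis q_stoch : stochastic_kernel q.

Lemma sum_Qop_sym (f : Y -> R) :
  symmetric_kernel q -> \sum_y Qop q f y = \sum_y f y.
Proof.
move=> q_sym; rewrite /Qop exchange_big /=; apply: eq_bigr => y' _.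
rewrite -mulr_suml; under eq_bigr do rewrite q_sym.
by case: q_stoch => _ ->; rewrite mul1r.
Qed.

Lemma harmonic_max_qpow (f : Y -> R) (fm : R) :
  (forall y, Qop q f y = f y) -> (forall y, f y <= fm) ->
  forall t y y', f y = fm -> 0 < qpow q t y y' -> f y' = fm.
Proof.
have [q_ge0 q_sum1] := q_stoch.
move=> hf hm; elim=> [|t IH] y y' fy /=.
  by case: (eqVneq y y') => [<-|]; rewrite ?ltxx.
move=> hpos; have [z qz] : exists z, 0 < q y z * qpow q t z y'.
  apply/existsP; move: hpos; apply: contraTT; rewrite negb_exists => /forallP hz.
  by rewrite -leNgt; apply: sumr_le0 => z _; rewrite leNgt hz.
have qyz : 0 < q y z.
  by rewrite lt_def q_ge0 andbT; apply: contraTneq qz => ->; rewrite mul0r ltxx.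
apply: (IH z); last by move: qz; rewrite pmulr_rgt0.
have sum0 : \sum_z q y z * (fm - f z) = 0.
  under eq_bigr do rewrite mulrBr.
  by rewrite sumrB -mulr_suml q_sum1 mul1r -[X in _ - X]/(Qop q f y) hf fy subrr.
have /eqP : q y z * (fm - f z) = 0.
  by apply: (psumr_eq0P _ sum0) => // i _; rewrite mulr_ge0 // subr_ge0.
by rewrite mulf_eq0 (gt_eqF qyz) subr_eq0 => /eqP.
Qed.

Lemma harmonic_const (f : Y -> R) :
  irreducible_kernel q -> (forall y, Qop q f y = f y) -> forall y y', f y = f y'.
Proof.
move=> q_irr hf y0.
have [ym _ ymax] := @arg_maxP _ _ _ y0 xpredT f isT.
have fmax y : f y = f ym.
  have [t ht] := q_irr ym y.
  by apply: (harmonic_max_qpow hf _ (erefl _) ht) => y'; apply: ymax.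
by move=> y'; rewrite !fmax.
Qed.

Variables (m : nat) (lam : 'I_m.+1 -> R).
Hypothesis lam0 : lam ord0 = 1.

Lemma W0_const (f : Y -> R) :
  irreducible_kernel q -> W q lam ord0 f -> forall y y', f y = f y'.
Proof. by move=> q_irr hW; apply: harmonic_const => // y; rewrite hW lam0 mul1r. Qed.

Lemma W_sum_eq0 i (f : Y -> R) :
  symmetric_kernel q -> injective lam -> i != ord0 -> W q lam i f ->
  \sum_y f y = 0.
Proof.
move=> q_sym lam_inj i0 hW.
have : \sum_y Qop q f y = lam i * \sum_y f y.
  by rewrite mulr_sumr; apply: eq_bigr => y _; rewrite hW.
rewrite sum_Qop_sym // => /esym/eqP.
rewrite -subr_eq0 -{2}[\sum_y f y]mul1r -mulrBl mulf_eq0 subr_eq0.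
by rewrite -lam0 (inj_eq lam_inj) (negbTE i0) => /eqP.
Qed.

Lemma W_ones :
  symmetric_kernel q -> irreducible_kernel q -> injective lam ->
  forall i f, W q lam i f -> forall y0,
    \sum_(y : Y) 1 * f y = (if i == ord0 then #|Y|%:R else 0) * f y0.
Proof.
move=> q_sym q_irr lam_inj i f hW y0; under eq_bigr do rewrite mul1r.
case: (eqVneq i ord0) => [i0|i0]; last by rewrite mul0r (W_sum_eq0 q_sym lam_inj i0 hW).
subst i; under eq_bigr do rewrite (W0_const q_irr hW _ y0).
by rewrite sumr_const mulr_natl.
Qed.

End Eigenspaces.

Definition type_sum (R : pzSemiRingType) m (ev : 'I_m.+1 -> R) (c : 'I_m.+1 -> nat) : R :=
  \sum_i (c i)%:R * ev i.

Lemma type_sum_tdecr (R : pzSemiRingType) m (ev : 'I_m.+1 -> R) (c : 'I_m.+1 -> nat) :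
  c ord0 != 0%N -> type_sum ev c = ev ord0 + type_sum ev (tdecr c).
Proof.
move=> c0; rewrite /type_sum (bigD1 ord0) //= [in RHS](bigD1 ord0) //= /tdecr eqxx.
rewrite addrA; congr (_ + _); last by apply: eq_bigr => i /negbTE ->.
by case: (c ord0) c0 => // c' _; rewrite mulrS mulrDl mul1r.
Qed.

Section JumpSpectrum.
Variables (R : realType) (n : nat) (Y : finType) (q : Y -> Y -> R).
Variables (m : nat) (lam : 'I_m.+1 -> R).
Local Notation pf := (pfun n Y).

Lemma Ptype_supp k c (G : pf -> R) :
  Ptype q lam k c G -> forall t, #|dom t| != k -> G t = 0.
Proof.
move=> [N [coef [H [hH hG]]]] t ct; rewrite hG; apply: big1 => i _.
have [A [cA [iota [Fj [_ [_ hF]]]]]] := hH i.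
rewrite hF; case: (eqVneq (dom t) A) => [tA|_]; last by rewrite mulr0.
by move: ct; rewrite tA cA eqxx.
Qed.

Lemma Pdef_supp k d c (X : pf -> R) :
  Pdef q lam k d c X -> forall t, #|dom t| != (k + d)%N -> X t = 0.
Proof.
case: d => [[hP _]|d /=]; first by rewrite addn0; exact: Ptype_supp hP.
case: ifP => _ => [hX t _|[G [_ hX]] t ct]; first exact: hX.
by rewrite hX /Dstar (negbTE ct).
Qed.

Variables (w : Y -> Y -> R) (ev : 'I_m.+1 -> R).
Hypothesis w_W : forall i f, W q lam i f ->
  forall y0, \sum_(y : Y) w y0 y * f y = ev i * f y0.

Lemma jump_fundamental c (A : {set 'I_n}) (F : pf -> R) :
  fundamental q lam c A F -> forall t, jump w F t = type_sum ev c * F t.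
Proof.
move=> [iota [Fj [hW [hc hF]]]] t.
have -> : type_sum ev c = \sum_(x in A) ev (iota x).
  rewrite (partition_big iota xpredT) //=; apply: eq_bigr => i _.
  rewrite (eq_bigr (fun=> ev i)); last by move=> x /andP [_ /eqP ->].
  rewrite sumr_const -hc mulr_natl; congr (_ *+ _).
  by apply: eq_card => x; rewrite !inE.
rewrite /jump hF; case: (eqVneq (dom t) A) => [tA|tA]; last first.
  rewrite mulr0; apply: big1 => j jt; apply: big1 => y _.
  by rewrite hF dom_pupd_in // (negbTE tA) mulr0.
rewrite mulr_suml; apply: eq_big => [x|j jt]; first by rewrite tA.
have jA : j \in A by rewrite -tA.
have [y0 tj] := in_dom jt; rewrite tj /=.
transitivity (\sum_(y : Y) w y0 y * Fj j y *
               \prod_(x in A | x != j) oapp (Fj x) 0 (t x)).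
  apply: eq_bigr => y _; rewrite hF dom_pupd_in // tA eqxx (bigD1 j jA) /=.
  rewrite ffunE eqxx /= mulrA; congr (_ * _); apply: eq_bigr => x /andP [_ xj].
  by rewrite ffunE (negbTE xj).
by rewrite -mulr_suml (w_W (hW j jA)) (bigD1 j jA) /= tj /= !mulrA.
Qed.

Lemma jump_Ptype k c (G : pf -> R) :
  Ptype q lam k c G -> forall t, jump w G t = type_sum ev c * G t.
Proof.
move=> [N [coef [H [hH hG]]]] t.
rewrite (jump_lincomb _ hG) hG mulr_sumr; apply: eq_bigr => i _.
have [A [_ fA]] := hH i.
by rewrite (jump_fundamental fA) mulrCA.
Qed.

Hypothesis w_row : forall y0, \sum_(y : Y) w y0 y = ev ord0.

Lemma Pdef_jump k d c (X : pf -> R) :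
  Pdef q lam k d c X -> forall t, jump w X t = type_sum ev c * X t.
Proof.
elim: d c X => [|d IH] c X /=; first by move=> [hP _]; exact: jump_Ptype hP.
case: eqP => [_ hX t|c0 [G [hG hX]] t].
  rewrite hX mulr0; apply: big1 => j _; apply: big1 => y _.
  by rewrite hX mulr0.
have jumpX : jump w X t = jump w (Dstar (k + d).+1 G) t.
  by apply: eq_bigr => j _; apply: eq_bigr => y _; rewrite hX addnS.
rewrite jumpX hX addnS.
case: (eqVneq #|dom t| (k + d).+1) => ct; last first.
  rewrite /Dstar (negbTE ct) mulr0 (jump_supp _ _ ct) //.
  by move=> t' ct'; rewrite /Dstar (negbTE ct').
rewrite (jump_Dstar _ w_row ct) (Dstar_scale _ (IH _ _ hG)).
by rewrite (type_sum_tdecr _ (introN eqP c0)) mulrDl.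
Qed.

End JumpSpectrum.

Section DeltaSpectrum.
Variables (R : realType) (n : nat) (Y : finType) (q : Y -> Y -> R).
Variables (m : nat) (lam : 'I_m.+1 -> R).
Local Notation pf := (pfun n Y).
Local Notation ones := (fun _ _ : Y => 1 : R).
Hypothesis ones_W : forall i f, W q lam i f -> forall y0,
  \sum_(y : Y) 1 * f y = (if i == ord0 then #|Y|%:R else 0) * f y0.

Lemma Pdef_jump_ones k d c (X : pf -> R) :
  Pdef q lam k d c X -> forall t, jump ones X t = (c ord0)%:R * #|Y|%:R * X t.
Proof.
move=> hX t; rewrite (Pdef_jump ones_W _ hX); last by move=> y0; rewrite sumr_const.
rewrite /type_sum (bigD1 ord0) //= big1 ?addr0 // => i /negbTE ->.
by rewrite mulr0.
Qed.

Lemma Pdef_Dstar_Dop k d c (X : pf -> R) :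
  Pdef q lam k d c X -> forall t, #|dom t| = (k + d)%N ->
  Dstar (k + d) (Dop (k + d) X) t =
    #|Y|%:R * d%:R * (n%:R - k%:R - (c ord0)%:R + 1) * X t.
Proof.
elim: d c X => [|d IH] c X /=.
  move=> [_ hD] t _; rewrite mulr0 !mul0r addn0 /Dstar; case: ifP => // _.
  by apply: big1 => phi _; rewrite hD.
case: eqP => [_ hX|c0 [G [hG hX]]] t ct.
  have -> : X = fun=> 0 by apply: funext.
  by rewrite (Dstar_Dop _ ct) jump_ones /exch !big1_eq addr0 mulr0.
have -> : X = Dstar (k + d).+1 G by apply: funext => t'; rewrite hX addnS.
rewrite addnS in ct *; set c' := (c ord0).-1.
have c0E : c ord0 = c'.+1 by rewrite prednK // lt0n; apply/eqP.
have dn : (k + d <= n)%N by apply: ltnW; rewrite -ct card_dom_le.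
have term i : i \in dom t -> Dop (k + d).+1 (Dstar (k + d).+1 G) (pdel t i) =
    (#|Y|%:R * (d.+1%:R * (n%:R - k%:R - c'%:R))) * G (pdel t i).
  move=> it; have ci := card_pdel ct it; rewrite (Dop_Dstar _ ci).
  have -> : exch G (pdel t i) =
      Dstar (k + d) (Dop (k + d) G) (pdel t i) - jump ones G (pdel t i).
    by rewrite (Dstar_Dop _ ci) addrC addKr.
  rewrite (IH _ _ hG _ ci).
  rewrite (Pdef_jump_ones hG) /tdecr eqxx -/c' natrM natrB // natrD.
  by rewrite -addn1 natrD; ring.
rewrite (Dstar_pdel _ ct) (eq_bigr _ term) -mulr_sumr -(Dstar_pdel _ ct) c0E.
by rewrite -addn1 natrD; ring.
Qed.

Lemma Pdef_Deltaop k d c (X : pf -> R) :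
  Pdef q lam k d c X -> (0 < k + d)%N -> forall t, #|dom t| = (k + d)%N ->
  Deltaop (k + d) X t =
    #|Y|%:R * (d%:R * (n%:R - k%:R - (c ord0)%:R + 1) - (c ord0)%:R) * X t.
Proof.
move=> hX kd_gt0 t ct; rewrite -(prednK kd_gt0) Deltaop_exch ?prednK //.
apply: (addrI (jump ones X t)); rewrite -(Dstar_Dop _ ct) (Pdef_Dstar_Dop hX ct).
by rewrite (Pdef_jump_ones hX); ring.
Qed.

End DeltaSpectrum.

Theorem theorem7p14 (R : realType) (n : nat) (Y : finType) (q : Y -> Y -> R)
  (m : nat) (lam : 'I_m.+1 -> R) (h : nat) (p0 : R)
  (a : 'I_m.+1 -> nat) (k : nat) (F : pfun n Y -> R) :
  (2 <= n)%N ->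
  symmetric_kernel q -> stochastic_kernel q -> irreducible_kernel q ->
  injective lam -> lam ord0 = 1 ->
  (forall i, is_eigenvalue q (lam i)) ->
  (forall l, is_eigenvalue q l -> exists i, lam i = l) ->
  (1 <= h)%N -> (h <= n - 1)%N -> 0 < p0 -> p0 < 1 ->
  type_size a = h -> (ell a <= k)%N -> (k <= h)%N ->
  Phck q lam h a k F ->
  forall t : pfun n Y,
    crestedP q h p0 F t =
    (p0 * (h%:R^-1 * \sum_(j < m.+1) (a j)%:R * lam j)
     + (1 - p0) * (((n%:R + (ell a)%:R - k%:R - h%:R) * (h%:R - k%:R + 1) - (n%:R - h%:R))
                   / (h%:R * (n%:R - h%:R)))) * F t.
Proof.
move=> n2 q_sym q_stoch q_irr lam_inj lam0 lam_eig _ h1 hn _ _ size_a _ kh hF t.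
have ones_W := W_ones q_stoch lam0 q_sym q_irr lam_inj.
have q_row y0 : \sum_(y : Y) q y0 y = lam ord0 by rewrite lam0; case: q_stoch.
have hk : (k + (h - k))%N = h by rewrite subnKC.
have := Pdef_supp hF; rewrite hk => F_supp.
have := Pdef_Deltaop ones_W hF; rewrite hk => F_Delta.
case: (eqVneq #|dom t| h) => ct; last first.
  by rewrite /crestedP /Mop /Deltaop (negbTE ct) F_supp // !mulr0 addr0.
have Mt : Mop q h F t = h%:R^-1 * (type_sum lam a * F t).
  by rewrite /Mop ct eqxx -(Pdef_jump (fun i f hW y0 => hW y0) q_row hF).
have Y_pos : (0 < #|Y|)%N.
  by have [f [[y _] _]] := lam_eig ord0; apply/card_gt0P; exists y; rewrite inE.
have hn' : (h < n)%N by lia.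
have ell_a : (ell a)%:R = h%:R - (a ord0)%:R :> R.
  by rewrite -size_a /type_size (bigD1 ord0) //= natrD addrC addKr.
rewrite /crestedP Mt (F_Delta h1 _ ct) ell_a /type_sum !natrM !natrB ?(ltnW hn') //.
have hR : h%:R != 0 :> R by rewrite pnatr_eq0 -lt0n.
have nhR : n%:R - h%:R != 0 :> R by rewrite subr_eq0 eqr_nat gtn_eqF.
have YR : #|Y|%:R != 0 :> R by rewrite pnatr_eq0 -lt0n.
by field; rewrite hR nhR YR.
Qed.
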